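(* In the setting below, for every $w\in W_M^Q$, \[ (\chi^M_w-\chi^H_w)(x_Q) = |I_w^M\le s|. \]
   Context: Fix $1\le k\le s<r$. Let $\epsilon_1,\ldots,\epsilon_r$ be an orthonormal basis of a real/complex weight space $\mathfrak{h}^*$, $\epsilon_1^*,\ldots,\epsilon_r^*$ the dual basis of $\mathfrak{h}$. $M=\mathrm{Sp}(2s)\times\mathrm{Sp}(2(r-s))$ has positive roots $R_M^+$: $\epsilon_i\pm\epsilon_j$ ($1\le i<j\le s$), $2\epsilon_i$ ($1\le i\le s$), and $\epsilon_i\pm\epsilon_j$ ($s<i<j\le r$), $2\epsilon_i$ ($s<i\le r$). $H=\mathrm{SO}(2s+1)\times\mathrm{Sp}(2(r-s))$ has the same weight space, positive roots $R^+_H$: $\epsilon_i\pm\epsilon_j$ ($1\le i<j\le s$), $\epsilon_i$ ($1\le i\le s$), and the same second-factor roots as $M$. $M$ and $H$ share the Weyl group $W_M$. $Q$ is the maximal parabolic of $M$ associated to omitting the simple root $\epsilon_k-\epsilon_{k+1}$ of the first factor (so $M/Q\cong\mathrm{IG}(k,2s)$), $Q^H$ the corresponding parabolic of $H$, and $W_M^Q$ the minimal length coset representatives (the same for $Q$ and $Q^H$). $x_Q=\sum_{i=1}^k\epsilon_i^*$. $\chi^M_w=\sum_{\beta\in(R^+_M\setminus R^+_{L})\cap w^{-1}R^+_M}\beta$ with $R^+_L$ the positive roots of the Levi of $Q$, and $\chi^H_w$ defined likewise with $R^+_H$ and the Levi of $Q^H$. $I^M_w\subseteq\{1,\ldots,2s\}$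 is the $k$-subset indexing the Schubert cell $C^M_w$ of $\mathrm{IG}(k,2s)$ relative to the standard isotropic flag of $\mathbb{C}^{2s}$ with ordered basis $e_1,\ldots,e_s,e_s',\ldots,e_1'$ (the cell being $\{W:\dim(W\cap F_j)=|\{i\in I^M_w:i\le j\}|\ \forall j\}$), and $|I\le s|$ is the number of elements of $I$ that are $\le s$. *)

(* Weight space = row vectors 'rV[int]_r, coordinates w.r.t.
   eps_1..eps_r (0-based indices: eps_(i+1) is 'e_i). *)
From mathcomp Require Import all_boot all_order all_algebra all_fingroup.
Set Implicit Arguments. Unset Strict Implicit. Unset Printing Implicit Defensive.
Import GRing.Theory.
Local Open Scope ring_scope.

Definition eps (r : nat) (i : 'I_r) : 'rV[int]_r := delta_mx 0 i.

Definition rminus (r : nat) (P : 'I_r -> 'I_r -> bool) : seq 'rV[int]_r :=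
  [seq eps p.1 - eps p.2 | p <- enum [pred p : 'I_r * 'I_r | (p.1 < p.2)%N && P p.1 p.2]].
Definition rplus (r : nat) (P : 'I_r -> 'I_r -> bool) : seq 'rV[int]_r :=
  [seq eps p.1 + eps p.2 | p <- enum [pred p : 'I_r * 'I_r | (p.1 < p.2)%N && P p.1 p.2]].
Definition rlong (r : nat) (c : int) (Q : 'I_r -> bool) : seq 'rV[int]_r :=
  [seq c *: eps i | i <- enum [pred i : 'I_r | Q i]].

Definition sameblock (r s : nat) (i j : 'I_r) : bool := ((i < s)%N == (j < s)%N).

(* R_M^+ for M = Sp(2s) x Sp(2(r-s)) *)
Definition RMpos (r s : nat) : seq 'rV[int]_r :=
  rminus (@sameblock r s) ++ rplus (@sameblock r s) ++ rlong 2 (fun _ => true).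
(* R_H^+ for H = SO(2s+1) x Sp(2(r-s)) *)
Definition RHpos (r s : nat) : seq 'rV[int]_r :=
  rminus (@sameblock r s) ++ rplus (@sameblock r s)
  ++ rlong 1 (fun i => (i < s)%N) ++ rlong 2 (fun i => (s <= i)%N).

(* pairs i<j lying in the same block of the Levi GL(k) x (rank s-k) x (second factor) *)
Definition leviA (r k s : nat) (i j : 'I_r) : bool :=
  [|| (j < k)%N, (k <= i)%N && (j < s)%N | (s <= i)%N].
Definition leviC (r k s : nat) (i j : 'I_r) : bool :=
  ((k <= i)%N && (j < s)%N) || (s <= i)%N.
Definition RLMpos (r k s : nat) : seq 'rV[int]_r :=
  rminus (@leviA r k s) ++ rplus (@leviC r k s) ++ rlong 2 (fun i => (k <= i)%N).
Definition RLHpos (r k s : nat) : seq 'rV[int]_r :=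
  rminus (@leviA r k s) ++ rplus (@leviC r k s)
  ++ rlong 1 (fun i => (k <= i)%N && (i < s)%N) ++ rlong 2 (fun i => (s <= i)%N).

(* Weyl group elements as signed permutation matrices acting on the right:
   w(lambda) := lambda *m A, so w(eps_i) = (-1)^(sg i) eps_(sigma i). *)
Definition spmx (r : nat) (sigma : {perm 'I_r}) (sg : {ffun 'I_r -> bool}) : 'M[int]_r :=
  \matrix_(i, j) (if sigma i == j then (-1) ^+ sg i else 0).
Definition blockpres (r s : nat) (sigma : {perm 'I_r}) : bool :=
  [forall i : 'I_r, (sigma i < s)%N == (i < s)%N].

Definition isWM (r s : nat) (A : 'M[int]_r) : bool :=
  [exists sigma : {perm 'I_r}, exists sg : {ffun 'I_r -> bool},
     (A == spmx sigma sg) && blockpres s sigma].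
(* W_L: Weyl group of the Levi of Q = S_k x W(C_(s-k)) x W(C_(r-s)) *)
Definition isWL (r k s : nat) (A : 'M[int]_r) : bool :=
  [exists sigma : {perm 'I_r}, exists sg : {ffun 'I_r -> bool},
     [&& A == spmx sigma sg, blockpres s sigma &
         [forall i : 'I_r, (i < k)%N ==> ((sigma i < k)%N && ~~ sg i)]]].

Definition wlen (r s : nat) (A : 'M[int]_r) : nat :=
  count (fun a => a *m A \notin RMpos r s) (RMpos r s).

(* W_M^Q: minimal length representatives of the cosets w W_L
   (the product w v, v in W_L, acts as lambda |-> (lambda *m V) *m A) *)
Definition inWMQ (r k s : nat) (A : 'M[int]_r) : Prop :=
  isWM s A /\ forall V : 'M[int]_r, isWL k s V -> (wlen s A <= wlen s (V *m A))%N.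

Definition chi (r : nat) (R RL : seq 'rV[int]_r) (A : 'M[int]_r) : 'rV[int]_r :=
  \sum_(b <- R | (b \notin RL) && (b *m A \in R)) b.
Definition chiM (r k s : nat) (A : 'M[int]_r) := chi (RMpos r s) (RLMpos r k s) A.
Definition chiH (r k s : nat) (A : 'M[int]_r) := chi (RHpos r s) (RLHpos r k s) A.

Definition evxQ (r k : nat) (b : 'rV[int]_r) : int := \sum_(i < r | (i < k)%N) b 0 i.

(* I_w^M (0-based, as subset of 'I_(2s)): basis e_1..e_s,e_s',..,e_1' is indexed
   0..2s-1; the T-fixed point wQ is span{w e_1,..,w e_k}, where w e_i = e_j if
   w eps_i = eps_j and w e_i = e_j' if w eps_i = -eps_j. *)
Definition Iw (r k s : nat) (A : 'M[int]_r) : {set 'I_(s + s)} :=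
  [set x : 'I_(s + s) | [exists i : 'I_r, exists j : 'I_r,
     [&& (i < k)%N, (j < s)%N &
        ((A i j == 1) && ((x : nat) == j)) ||
        ((A i j == -1) && ((x : nat) == (s + s).-1 - j)%N)]]].

From mathcomp Require Import all_boot all_order all_algebra all_fingroup.
From mathcomp Require Import zify.
Import GRing.Theory.
Set Implicit Arguments. Unset Strict Implicit.
Local Open Scope ring_scope.

(* The roots +-eps_i +-eps_j are common to M and H, with the same Levi parts,
   and a signed permutation w maps them to roots of the same shape; so they
   contribute equally to chi^M_w and chi^H_w.  What remains is 2 eps_i against
   eps_i for i <= k with w eps_i positive (for larger i both lie in the Levi),
   hence chi^M_w - chi^H_w = sum of those eps_i, whose value at x_Q counts them;
   i |-> w eps_i = eps_(sigma i) is a bijection from them onto I^M_w cap [1, s]. *)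

Section Weights.
Variable r : nat.
Implicit Types (i j p q : 'I_r) (c d u w : int) (x : 'rV[int]_r).

Lemma eps_coord i j : eps i 0 j = (i == j)%:R.
Proof. by rewrite /eps mxE eqxx /= eq_sym. Qed.

Lemma scale_eps_mulmx_spmx (sigma : {perm 'I_r}) (sg : {ffun 'I_r -> bool}) d i :
  (d *: eps i) *m spmx sigma sg = (d * (-1) ^+ sg i) *: eps (sigma i).
Proof.
rewrite -scalemxAl -scalerA; congr (_ *: _); apply/rowP => j.
rewrite mxE (bigD1 i) //= big1 => [|l li]; last first.
  by rewrite eps_coord eq_sym (negbTE li) mul0r.
by rewrite !mxE !eqxx mul1r addr0 eq_sym; case: eqP; rewrite ?mulr1 ?mulr0.
Qed.

Definition short_weight x :=
  exists p q u w, [/\ p != q, u != 0, w != 0 & x = u *: eps p + w *: eps q].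

Lemma short_weight_neq_long x c i : short_weight x -> x != c *: eps i.
Proof.
case=> p [q [u [w [pq u0 w0 ->]]]]; apply/eqP/rowP.
have [->|ip] := eqVneq i p; [move/(_ q) | move/(_ p)];
  rewrite !mxE /= !eqxx ?[q == p]eq_sym ?[p == i]eq_sym (negbTE pq) ?(negbTE ip);
  rewrite !mulr0 !mulr1 ?addr0 ?add0r => /eqP; exact/negP.
Qed.

Lemma short_weight_rminus P x : x \in rminus P -> short_weight x.
Proof.
case/mapP => -[a b]; rewrite mem_enum inE /= => /andP[ab _] ->.
by exists a, b, 1, (-1); rewrite neq_ltn ab scaleNr !scale1r.
Qed.

Lemma short_weight_rplus P x : x \in rplus P -> short_weight x.
Proof.
case/mapP => -[a b]; rewrite mem_enum inE /= => /andP[ab _] ->.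
by exists a, b, 1, 1; rewrite neq_ltn ab !scale1r.
Qed.

Lemma short_weight_mulmx_spmx (sigma : {perm 'I_r}) sg x :
  short_weight x -> short_weight (x *m spmx sigma sg).
Proof.
case=> p [q [u [w [pq u0 w0 ->]]]].
exists (sigma p), (sigma q), (u * (-1) ^+ sg p), (w * (-1) ^+ sg q).
by rewrite (inj_eq perm_inj) !mulf_neq0 ?signr_eq0 // mulmxDl !scale_eps_mulmx_spmx.
Qed.

Lemma short_weight_notin_rlong c Q x : short_weight x -> (x \in rlong c Q) = false.
Proof.
move=> xs; apply/negbTE/negP => /mapP[i _ /eqP].
exact/negP/short_weight_neq_long.
Qed.

Lemma scale_eps_notin_rminus P d j : (d *: eps j \in rminus P) = false.
Proof.
apply/negbTE/negP => /short_weight_rminus/(short_weight_neq_long d j).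
by rewrite eqxx.
Qed.

Lemma scale_eps_notin_rplus P d j : (d *: eps j \in rplus P) = false.
Proof.
apply/negbTE/negP => /short_weight_rplus/(short_weight_neq_long d j).
by rewrite eqxx.
Qed.

Lemma scale_eps_in_rlong c Q d j :
  d != 0 -> (d *: eps j \in rlong c Q) = (d == c) && Q j.
Proof.
move=> d0; apply/mapP/andP => [[i]|[/eqP -> Qj]]; last by exists j; rewrite ?mem_enum.
rewrite mem_enum => Qi /rowP/(_ j); rewrite !mxE /= !eqxx mulr1.
have [-> ->|_ d00] := eqVneq j i; first by rewrite mulr1.
by rewrite d00 mulr0 eqxx in d0.
Qed.

Lemma sum_rlong c Q (P : pred 'rV[int]_r) :
  \sum_(b <- rlong c Q | P b) b = \sum_(i | Q i && P (c *: eps i)) c *: eps i.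
Proof. by rewrite big_map big_enum_cond. Qed.

End Weights.

Lemma blockpres_ltE r s (sigma : {perm 'I_r}) :
  blockpres s sigma -> forall i, (sigma i < s)%N = (i < s)%N.
Proof. by move=> /forallP hs i; rewrite (eqP (hs i)). Qed.

Lemma evxQ_sum r k (I : Type) (l : seq I) (P : pred I) (F : I -> 'rV[int]_r) :
  evxQ k (\sum_(x <- l | P x) F x) = \sum_(x <- l | P x) evxQ k (F x).
Proof.
apply: (big_morph (evxQ k)) => [a b|]; rewrite /evxQ.
  by rewrite -big_split; apply: eq_bigr => j _; rewrite mxE.
by rewrite big1 // => j _; rewrite mxE.
Qed.

Lemma evxQ_eps r k (i : 'I_r) : (i < k)%N -> evxQ k (eps i) = 1.
Proof.
move=> ik; rewrite /evxQ (bigD1 i) //= eps_coord eqxx big1 ?addr0 //.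
move=> j /andP[_ ji].
by rewrite eps_coord eq_sym (negbTE ji).
Qed.

Lemma evxQ_sum_eps r k (P : pred 'I_r) :
  evxQ k (\sum_(i : 'I_r | (i < k)%N && P i) eps i) =
  #|[set i : 'I_r | (i < k)%N && P i]|%:Z.
Proof.
rewrite evxQ_sum (eq_bigr (fun=> 1)) => [|i /andP[ik _]]; last exact: evxQ_eps.
by rewrite sumr_const cardsE natz.
Qed.

Lemma mem_Iw_spmx_low r k s (sigma : {perm 'I_r}) sg (x : 'I_(s + s)) :
  (x < s)%N -> (x \in Iw k s (spmx sigma sg)) =
  [exists i : 'I_r, [&& (i < k)%N, ~~ sg i & sigma i == x :> nat]].
Proof.
move=> xs; rewrite inE; apply/existsP/existsP => -[i].
  case/existsP => j /and3P[ik js]; rewrite mxE.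
  case/orP => /andP[+ /eqP xj]; last by lia.
  case: (sigma i =P j) => // sij sg1; exists i; rewrite ik xj sij eqxx andbT.
  by move: sg1; case: (sg i).
case/and3P => ik nsg /eqP sx; exists i; apply/existsP; exists (sigma i).
by rewrite ik sx xs mxE eqxx (negbTE nsg) eqxx.
Qed.

Lemma card_Iw_spmx_low r k s (sigma : {perm 'I_r}) sg :
  (k <= s)%N -> blockpres s sigma ->
  #|[set x in Iw k s (spmx sigma sg) | (x < s)%N]| =
  #|[set i : 'I_r | (i < k)%N && ~~ sg i]|.
Proof.
move=> ks /blockpres_ltE sigma_lt; set Y := [set i : 'I_r | _].
have sigmaY i : i \in Y -> (sigma i < s)%N.
  by rewrite inE sigma_lt => /andP[ik _]; apply: leq_trans ks.
have [s0|s_gt0] := posnP s.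
  rewrite (_ : Y = set0) ?cards0; last first.
    by apply/setP => i; rewrite in_set0; apply/negbTE/negP => /sigmaY; rewrite s0.
  apply/eqP; rewrite cards_eq0; apply/eqP/setP => x.
  by rewrite !inE; apply/negbTE/negP => /andP[_ xs]; lia.
pose h i : 'I_(s + s) := insubd (Ordinal (ltn_addr s s_gt0)) (sigma i : nat).
have hE i : i \in Y -> h i = sigma i :> nat.
  by move/sigmaY => si; rewrite val_insubd ltn_addr.
have -> : [set x in Iw k s (spmx sigma sg) | (x < s)%N] = h @: Y.
  apply/setP => x; rewrite inE; apply/andP/imsetP => [[+ xs]|[i iY ->]].
    rewrite mem_Iw_spmx_low // => /existsP[i /and3P[ik nsg /eqP sx]].
    have iY : i \in Y by rewrite inE ik.
    by exists i => //; apply/val_inj; rewrite /= hE.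
  have hs : (h i < s)%N by rewrite hE ?sigmaY.
  rewrite mem_Iw_spmx_low //; split=> //; apply/existsP; exists i.
  by rewrite hE // eqxx andbT; move: iY; rewrite inE.
rewrite (card_in_imset (f := h)) // => i j iY jY /(congr1 val) /=.
by rewrite !hE // => /val_inj/perm_inj.
Qed.

Section SignedPermutation.
Variables (r k s : nat) (sigma : {perm 'I_r}) (sg : {ffun 'I_r -> bool}).
Hypotheses (ks : (k <= s)%N) (sigma_block : blockpres s sigma).
Local Notation w := (spmx sigma sg).

Lemma sum_short_roots_chiM_chiH (l : seq 'rV[int]_r) : {in l, forall b, short_weight b} ->
  \sum_(b <- l | (b \notin RLMpos r k s) && (b *m w \in RMpos r s)) b =
  \sum_(b <- l | (b \notin RLHpos r k s) && (b *m w \in RHpos r s)) b.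
Proof.
move=> l_short; rewrite big_mkcond [RHS]big_mkcond; apply: eq_big_seq => b /l_short bs.
have bws := short_weight_mulmx_spmx sigma sg bs.
by rewrite /RLMpos /RLHpos /RMpos /RHpos !mem_cat !(short_weight_notin_rlong _ _ bs)
  !(short_weight_notin_rlong _ _ bws) !orbF.
Qed.

Lemma chiM_filter_2eps (i : 'I_r) :
  (2 *: eps i \notin RLMpos r k s) && (2 *: eps i *m w \in RMpos r s) =
  (i < k)%N && ~~ sg i.
Proof.
rewrite /RLMpos /RMpos !mem_cat scale_eps_mulmx_spmx !scale_eps_notin_rminus.
rewrite !scale_eps_notin_rplus !scale_eps_in_rlong ?mulf_neq0 ?signr_eq0 //= -ltnNge.
by case: (sg i).
Qed.

Lemma chiH_filter_eps (i : 'I_r) : (i < s)%N &&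
    ((1 *: eps i \notin RLHpos r k s) && (1 *: eps i *m w \in RHpos r s)) =
  (i < k)%N && ~~ sg i.
Proof.
rewrite /RLHpos /RHpos !mem_cat scale_eps_mulmx_spmx !scale_eps_notin_rminus.
rewrite !scale_eps_notin_rplus !scale_eps_in_rlong ?mulf_neq0 ?signr_eq0 //=.
rewrite mul1r orbF (blockpres_ltE sigma_block).
case: (ltnP i s) => [i_lt_s|s_le_i] /=.
  by rewrite !andbT -ltnNge; case: (sg i).
by rewrite ltnNge (leq_trans ks s_le_i).
Qed.

Lemma chiH_filter_2eps (i : 'I_r) : (s <= i)%N &&
  ((2 *: eps i \notin RLHpos r k s) && (2 *: eps i *m w \in RHpos r s)) = false.
Proof.
apply/negbTE; rewrite negb_and -implybE; apply/implyP => si.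
by rewrite /RLHpos !mem_cat !scale_eps_in_rlong // eqxx si !orbT.
Qed.

Lemma chiM_sub_chiH_spmx :
  chiM k s w - chiH k s w = \sum_(i < r | (i < k)%N && ~~ sg i) eps i.
Proof.
rewrite /chiM /chiH /chi {1}/RMpos {1}/RHpos !big_cat /=.
rewrite (sum_short_roots_chiM_chiH (@short_weight_rminus _ _)).
rewrite (sum_short_roots_chiM_chiH (@short_weight_rplus _ _)).
rewrite !sum_rlong (eq_bigl _ _ chiM_filter_2eps) (eq_bigl _ _ chiH_filter_eps).
rewrite (eq_bigl _ _ chiH_filter_2eps) big_pred0_eq addr0.
rewrite !opprD addrACA subrr add0r addrACA subrr add0r -sumrB.
by apply: eq_bigr => i _; rewrite scale1r scaler_nat mulr2n addrK.
Qed.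

End SignedPermutation.

Theorem mainTheorem8 (k s r : nat) (hk : (1 <= k)%N) (hks : (k <= s)%N) (hsr : (s < r)%N)
  (A : 'M[int]_r) (hA : inWMQ k s A) :
  evxQ k (chiM k s A - chiH k s A) = (#|[set x in Iw k s A | (x < s)%N]|)%:Z.
Proof.
case: hA => /existsP[sigma /existsP[sg /andP[/eqP -> sigma_block]]] _.
by rewrite chiM_sub_chiH_spmx // evxQ_sum_eps card_Iw_spmx_low.
Qed.
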